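(* Let $L_0,\dots,L_N$ be connected, closed, embedded Lagrangian submanifolds of a closed symplectic manifold $X$ with $\iota_N:L=\coprod_{i=0}^NL_i\to X$ having transverse self-intersection, let $V=\{0,\dots,N\}=V'\sqcup V''$ be a partition, $L'=\coprod_{v\in V'}L_v$, $L''=\coprod_{v\in V''}L_v$, and let $E_0=(L'\times_XL')\cup(L'\times_XL'')\cup(L''\times_XL'')\subset L\times_XL$. Let $\mathscr M_{\iota',\iota''}$ be the full $\mathbf{fc}$-submulticategory of $\mathscr M_{\iota_N}$ on the directed subgraph $(V,E_0)$. Then $\mathscr M_{\iota',\iota''}$ is factor-closed in $\mathscr M_{\iota_N}$.
   Context: $\mathscr M_{\iota_N}$ is the vertically discrete $\mathbf{fc}$-multicategory whose $0$-cells are $V=\{0,\dots,N\}$ (components of $L$), horizontal $1$-cells the points $(p,q)\in L\times_XL$ (from the index of the component containing $p$ to that containing $q$), and $2$-cells over a profile-loop $(e_1,\dots,e_n;e_0)$ the moduli space of isomorphism classes of $J$-holomorphic stable polygons $(\Sigma,z_0,\dots,z_n,u,\gamma)$ with boundary on $\iota_N(L)$, boundary lift $\gamma$ to $L$, $(\gamma(z_0+),\gamma(z_0-))=e_0$, $(\gamma(z_i-),\gamma(z_i+))=e_i$; composition is gluing at boundary marked points, identity $2$-cells adjoined by convention. For a directed graph $(V,E,s,t)$: $E^*$ = composable strings; profile-loop $(\vec e;e_0)$ = $\vec e\in E^*$ with the same start/end vertex as $e_0$. A vertically discrete $\mathbf{fc}$-multicategory has $2$-cell sets per profile-loop, identity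 $2$-cells, and partial compositions $\circ_i$ satisfying coloured-operad axioms. For a directed subgraph $E_0$, the full $\mathbf{fc}$-submulticategory on $E_0$ keeps all $2$-cells over profile-loops whose edges lie in $E_0$. It is factor-closed if $\mathbf u\circ_i\mathbf u'$ in it implies $\mathbf u$ and $\mathbf u'$ in it. *)

From mathcomp Require Import all_boot.
Set Implicit Arguments. Unset Strict Implicit. Unset Printing Implicit Defensive.

Fixpoint chain {V E : Type} (src tgt : E -> V) (v : V) (es : seq E) (w : V) : Prop :=
  match es with
  | [::] => v = w
  | e :: es' => src e = v /\ chain src tgt (tgt e) es' w
  end.

(* Vertically discrete fc-multicategory over a directed graph with vertex
   type V. *)
Record fcMulticat (V : Type) := FcMulticat {
  edge : Type;
  src : edge -> V;
  tgt : edge -> V;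
  cell : Type;
  pin : cell -> seq edge;
  pout : cell -> edge;
  cell_loop : forall u, chain src tgt (src (pout u)) (pin u) (tgt (pout u));
  idc : edge -> cell;
  idc_pin : forall e, pin (idc e) = [:: e];
  idc_pout : forall e, pout (idc e) = e;
  comp : cell -> nat -> cell -> option cell;
  comp_defined : forall u i u',
    (exists w, comp u i u' = Some w) <->
    (i < size (pin u) /\ pout u' = nth (pout u) (pin u) i);
  comp_pin : forall u i u' w, comp u i u' = Some w ->
    pin w = take i (pin u) ++ pin u' ++ drop i.+1 (pin u);
  comp_pout : forall u i u' w, comp u i u' = Some w -> pout w = pout u;
  comp_idl : forall u, comp (idc (pout u)) 0 u = Some u;
  comp_idr : forall u i, i < size (pin u) ->
    comp u i (idc (nth (pout u) (pin u) i)) = Some u;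
  comp_assoc_seq : forall u v w i j, j < size (pin v) ->
    obind (fun x => comp x (i + j) w) (comp u i v)
    = obind (fun y => comp u i y) (comp v j w);
  comp_assoc_par : forall u v w i k, i < k ->
    obind (fun x => comp x i v) (comp u k w)
    = obind (fun x => comp x (k + size (pin v)).-1 w) (comp u i v)
}.

Definition in_full_sub (V : Type) (M : fcMulticat V) (E0 : pred (edge M))
  (u : cell M) : bool :=
  all E0 (pin u) && E0 (pout u).

Definition factor_closed (V : Type) (M : fcMulticat V) (S : pred (cell M)) : Prop :=
  forall u i u' w, comp u i u' = Some w -> S w -> S u && S u'.

(* Given the partition V = V' ⊔ V'' (V'' = complement of V'), the edge set
   E0 = (L'×L') ∪ (L'×L'') ∪ (L''×L''): every edge except those going from
   V'' to V'. *)
Arguments chain : clear implicits.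
Definition E0 (N : nat) (M : fcMulticat 'I_N.+1) (V' : {set 'I_N.+1}) : pred (edge M) :=
  fun e => ~~ ((src e \notin V') && (tgt e \in V')).
Arguments E0 N M V' : clear implicits.
Arguments in_full_sub V M E0 : clear implicits.

(* A composite u o_i u' lists all input edges of u except the i-th one,
   which is replaced by the inputs of u'; so everything is in E0 except
   possibly the i-th input of u, i.e. the output of u'.  E0 consists of the
   edges that never leave V'' for V', and u' is a loop from the source to the
   target of its output: a string of E0-edges starting in V'' stays in V'', so
   the output of u' is an E0-edge too. *)
From mathcomp Require Import all_boot.

Lemma chain_preserved {V E : Type} {src tgt : E -> V} (P : pred V)
    {v : V} {es : seq E} {w : V} :
  chain V E src tgt v es w -> all (fun e => P (src e) ==> P (tgt e)) es ->
  P v -> P w.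
Proof.
elim: es v => [|e es IH] v /=; first by move->.
move=> [<- chain_es] /andP[/implyP preserved_e all_es] Pv.
exact: IH chain_es all_es (preserved_e Pv).
Qed.

Lemma E0_preserves_outside (N : nat) (M : fcMulticat 'I_N.+1)
    (V' : {set 'I_N.+1}) (e : edge M) :
  E0 N M V' e = (src e \notin V') ==> (tgt e \notin V').
Proof. by rewrite /E0; case: (src e \in V'); case: (tgt e \in V'). Qed.

Lemma E0_pout {N : nat} {M : fcMulticat 'I_N.+1} {V' : {set 'I_N.+1}}
    {u : cell M} :
  all (E0 N M V') (pin u) -> E0 N M V' (pout u).
Proof.
move=> all_pin; rewrite E0_preserves_outside; apply/implyP.
apply: (chain_preserved [pred x | x \notin V'] (cell_loop u)).
by apply: sub_all all_pin => e; rewrite E0_preserves_outside.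
Qed.

Theorem mainTheorem9 (N : nat) (M : fcMulticat 'I_N.+1) (V' : {set 'I_N.+1}) :
  factor_closed (in_full_sub _ M (E0 N M V')).
Proof.
move=> u i u' w comp_w.
rewrite /in_full_sub (comp_pin comp_w) (comp_pout comp_w) !all_cat.
move=> /andP[/and3P[all_take all_pin' all_drop] E0_pout_u].
have [lt_i_size pout_u'] : i < size (pin u) /\ pout u' = nth (pout u) (pin u) i.
  by apply/(comp_defined u i u'); exists w.
have E0_pout_u' := E0_pout all_pin'.
rewrite all_pin' E0_pout_u' E0_pout_u andbT.
rewrite -(cat_take_drop i (pin u)) (drop_nth (pout u) lt_i_size) all_cat /=.
by rewrite all_take all_drop -pout_u' E0_pout_u'.
Qed.
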